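(* Let $b\ge 2$ and $S\in\Sigma_b^\infty$. The following are equivalent: (a) $\limsup_{n\to\infty}\frac{\log d_{LZ(b)}(S\upharpoonright n)}{n}>0$; (b) there exist $\alpha<1$ and infinitely many full parses $w\sqsubseteq S$ with $D(w)\log_b|w|<\alpha(b-1)|w|$; (c) there exist $\alpha<1$ and infinitely many full parses $w\sqsubseteq S$ with $D(w)\log_b D(w)<\alpha(b-1)|w|$.
   Context: $\Sigma_b=\{0,\dots,b-1\}$; $\Sigma_b^\infty$ is the set of infinite sequences over $\Sigma_b$; $S\upharpoonright n$ is the length-$n$ prefix of $S$; $w\sqsubseteq S$ means $w$ is a prefix of $S$. Lempel–Ziv parsing in base $b$: let $T_0=\{\lambda\}\cup\Sigma_b$. Given $w$, parse left to right: having found phrases $x(1),\dots,x(i)$ and tree $T_i$, the next phrase $x(i+1)$ is the shortest nonempty prefix of the remaining input that is a leaf of $T_i$, and $T_{i+1}=T_i\cup\{x(i+1)a:a\in\Sigma_b\}$. If the input ends exactly at the end of a phrase (or $w=\lambda$), $w=x(1)\cdots x(j)$ is a full parse; otherwise $w=x(1)\cdots x(j)u$ with $u$ a nonempty interior vertex of $T_j$, the partial phrase. $D(w)=1+(b-1)j$ if $w$ is a full parse with $j$ phrases, and $D(w)=1+(b-1)(j+1)$ if $w$ has $j$ full phrases and a partial phrase $u$; then $L(u)$ is the number of leaves of $T_j$ extending $u$. With $\mathrm{fact}_b(1+(b-1)r)=\prod_{k=1}^r(1+(b-1)k)$, the base-$b$ Lempel–Ziv martingale is $d_{LZ(b)}(w)=b^{|w|}/\mathrm{fact}_b(D(w))$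 if $w$ is a full parse, and $b^{|w|}L(u)/\mathrm{fact}_b(D(w))$ otherwise. *)

From Stdlib Require Import Reals Lra Lia Arith List Bool.
Import ListNotations.
Open Scope R_scope.

(* Words over Sigma_b are lists of naturals (symbols < b). *)
Definition word := list nat.

Definition word_in (x : word) (T : list word) : bool :=
  if in_dec (list_eq_dec Nat.eq_dec) x T then true else false.

Definition children (b : nat) (x : word) : list word :=
  map (fun a => x ++ [a]) (seq 0 b).

Definition is_leaf (b : nat) (T : list word) (x : word) : bool :=
  word_in x T && negb (existsb (fun c => word_in c T) (children b x)).

Definition T0 (b : nat) : list word := [] :: map (fun a => [a]) (seq 0 b).

(* LZ parsing of [rest], where [cur] is the portion of the current phrase read
   so far.  Returns (number of full phrases j, tree T_j, partial phrase u);
   u = [] means a full parse.  The next phrase is the shortest nonempty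
   prefix of the remaining input that is a leaf of the current tree. *)
Fixpoint lz_parse (b : nat) (T : list word) (cur rest : word)
  : nat * list word * word :=
  match rest with
  | [] => (0%nat, T, cur)
  | a :: r =>
      let cur' := cur ++ [a] in
      if is_leaf b T cur' then
        match lz_parse b (T ++ children b cur') [] r with
        | (j, T', u) => (S j, T', u)
        end
      else lz_parse b T cur' r
  end.

Definition lz (b : nat) (w : word) := lz_parse b (T0 b) [] w.

Definition nphrases (b : nat) (w : word) : nat := fst (fst (lz b w)).
Definition final_tree (b : nat) (w : word) : list word := snd (fst (lz b w)).
Definition partial_phrase (b : nat) (w : word) : word := snd (lz b w).

Definition full_parse (b : nat) (w : word) : Prop := partial_phrase b w = [].

Definition Dr (b : nat) (w : word) : nat :=
  match partial_phrase b w with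
  | [] => nphrases b w
  | _ => S (nphrases b w)
  end.
Definition D (b : nat) (w : word) : nat := (1 + (b - 1) * Dr b w)%nat.

(* fact_b(1 + (b-1) r) = prod_{k=1}^r (1 + (b-1) k), indexed by r *)
Fixpoint factb (b r : nat) : nat :=
  match r with
  | O => 1%nat
  | S r' => (factb b r' * (1 + (b - 1) * S r'))%nat
  end.

Fixpoint is_prefix (u x : word) : bool :=
  match u, x with
  | [], _ => true
  | a :: u', c :: x' => Nat.eqb a c && is_prefix u' x'
  | _ :: _, [] => false
  end.

Definition Lleaves (b : nat) (T : list word) (u : word) : nat :=
  length (filter (fun x => is_leaf b T x && is_prefix u x) T).

Definition d_LZ (b : nat) (w : word) : R :=
  match partial_phrase b w with
  | [] => INR b ^ length w / INR (factb b (Dr b w))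
  | u => INR b ^ length w * INR (Lleaves b (final_tree b w) u)
           / INR (factb b (Dr b w))
  end.

Definition prefix (S : nat -> nat) (n : nat) : word := map S (seq 0 n).

Definition logb (b : nat) (x : R) : R := ln x / ln (INR b).

From Stdlib Require Import Reals List Lra Lia Factorial Bool.
Import ListNotations.
Open Scope R_scope.

(* Write j for the number of phrases of a prefix w.  The parse tree after j phrases has
   1 + b + b j nodes and depth at most j + 1, so the k-th phrase has length at most k and
   2|w| <= j (j + 1) for a full parse; dropping the partial phrase (at most j symbols)
   turns any prefix into a full parse with the same j.  For a full parse
   d_LZ(w) = b^|w| / fact_b(D(w)) exactly, and in general d_LZ is at most twice that,
   while j ln j - j <= ln fact_b(D) <= j ln D.
   (c) => (a): j ln D < alpha |w| ln b gives ln d_LZ(w) > (1 - alpha) |w| ln b.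
   (a) => (b): a growth rate eps forces j ln j <= (ln b - eps + o(1)) |w|, hence j = o(|w|)
   and, comparing ln |w| with ln j through the tangent of ln, j ln |w| <= (ln b - eps/2) |w|.
   (b) => (c): (b) forces D = o(|w|), and ln D <= ln b + ln |w| since D <= b |w|. *)

(** * Logarithms and factorials *)

Lemma ln_le x y : 0 < x -> x <= y -> ln x <= ln y.
Proof. intros Hx [Hxy | <-]; [left; apply ln_increasing |]; lra. Qed.

Lemma ln_ge0 x : 1 <= x -> 0 <= ln x.
Proof. intros Hx; rewrite <- ln_1; apply ln_le; lra. Qed.

Lemma ln_pos_inv x : 0 < ln x -> 0 < x.
Proof. unfold ln; destruct (Rlt_dec 0 x); [trivial | lra]. Qed.

Lemma ln_le_sub_1 y : 0 < y -> ln y <= y - 1.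
Proof.
  intros Hy; rewrite <- (ln_exp (y - 1)); apply ln_le; [exact Hy |].
  pose proof (exp_ineq1_le (y - 1)); lra.
Qed.

(* The tangent line of ln at 1/t. *)
Lemma ln_le_tangent t y : 0 < t -> 0 < y -> ln y <= t * y - 1 - ln t.
Proof.
  intros Ht Hy; pose proof (ln_le_sub_1 (t * y) ltac:(nra)) as H.
  rewrite ln_mult in H by lra; lra.
Qed.

Lemma ln_nat_pos b : (2 <= b)%nat -> 0 < ln (INR b).
Proof. intros Hb; rewrite <- ln_1; apply ln_increasing; [lra | apply lt_1_INR; lia]. Qed.

Lemma exists_nat_ge x : exists n : nat, x <= INR n.
Proof. destruct (INR_archimed 1 x) as [n Hn]; [lra | exists n; lra]. Qed.

Lemma exists_nat_ln_ge A : exists n : nat, (1 <= n)%nat /\ A <= ln (INR n).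
Proof.
  destruct (exists_nat_ge (exp A)) as [n Hn].
  exists (S n); split; [lia |].
  rewrite <- (ln_exp A) at 1; apply ln_le; [apply exp_pos | rewrite S_INR; lra].
Qed.

Lemma mul_logb_lt_iff b x y z : (2 <= b)%nat ->
  x * logb b y < z <-> x * ln y < z * ln (INR b).
Proof.
  intros Hb; pose proof (ln_nat_pos b Hb) as HL; unfold logb.
  replace (x * (ln y / ln (INR b))) with (x * ln y / ln (INR b)) by (field; lra).
  split; intros H.
  - apply Rmult_lt_reg_r with (/ ln (INR b)); [apply Rinv_0_lt_compat, HL |].
    replace (z * ln (INR b) * / ln (INR b)) with z by (field; lra); exact H.
  - apply Rmult_lt_reg_r with (ln (INR b)); [exact HL |].
    replace (x * ln y / ln (INR b) * ln (INR b)) with (x * ln y) by (field; lra); exact H.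
Qed.

Lemma lt_div_iff x y z : 0 < z -> x < y / z <-> x * z < y.
Proof.
  intros Hz; split; intros H.
  - apply (Rmult_lt_compat_r z) in H; [| exact Hz].
    replace (y / z * z) with y in H by (field; lra); exact H.
  - apply (Rmult_lt_compat_r (/ z)) in H; [| apply Rinv_0_lt_compat, Hz].
    replace (x * z * / z) with x in H by (field; lra); exact H.
Qed.

Lemma xlnx_succ_le x : 0 <= x ->
  (x + 1) * ln (x + 1) - (x + 1) <= x * ln x - x + ln (x + 1).
Proof.
  intros [Hx | <-]; [| rewrite Rplus_0_l, ln_1; lra].
  pose proof (ln_le_tangent (/ x) (x + 1) (Rinv_0_lt_compat x Hx) ltac:(lra)) as H.
  rewrite ln_Rinv in H by exact Hx.
  replace (/ x * (x + 1) - 1 - - ln x) with (/ x + ln x) in H by (field; lra).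
  apply (Rmult_le_compat_l x) in H; [| lra].
  replace (x * (/ x + ln x)) with (1 + x * ln x) in H by (field; lra); lra.
Qed.

Lemma ln_fact_ge r : INR r * ln (INR r) - INR r <= ln (INR (fact r)).
Proof.
  induction r as [|r IH]; [simpl; rewrite ln_1; lra |].
  change (fact (S r)) with (S r * fact r)%nat.
  rewrite mult_INR, ln_mult, S_INR by (apply lt_0_INR; pose proof (lt_O_fact r); lia).
  pose proof (xlnx_succ_le (INR r) (pos_INR r)); lra.
Qed.

Lemma fact_le_factb b r : (2 <= b)%nat -> (fact r <= factb b r)%nat.
Proof.
  intros Hb; induction r as [|r IH]; [simpl; lia |].
  change (fact (S r) <= factb b r * (1 + (b - 1) * S r))%nat.
  rewrite Nat.mul_comm; apply Nat.mul_le_mono; [nia | exact IH].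
Qed.

Lemma factb_le_pow b r : (factb b r <= (1 + (b - 1) * r) ^ r)%nat.
Proof.
  induction r as [|r IH]; [simpl; lia |].
  change (factb b (S r)) with (factb b r * (1 + (b - 1) * S r))%nat.
  rewrite Nat.pow_succ_r', Nat.mul_comm; apply Nat.mul_le_mono_l.
  apply (Nat.le_trans _ _ _ IH), Nat.pow_le_mono_l; nia.
Qed.

Lemma factb_pos b r : 0 < INR (factb b r).
Proof.
  apply lt_0_INR; induction r as [|r IH]; [simpl; lia |].
  apply Nat.mul_pos_pos; [exact IH | apply Nat.lt_0_succ].
Qed.

Lemma ln_factb_ge b r : (2 <= b)%nat ->
  INR r * ln (INR r) - INR r <= ln (INR (factb b r)).
Proof.
  intros Hb; eapply Rle_trans; [apply ln_fact_ge |].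
  apply ln_le; [apply lt_0_INR, lt_O_fact | apply le_INR, fact_le_factb, Hb].
Qed.

Lemma ln_factb_le b r :
  ln (INR (factb b r)) <= INR r * ln (INR (1 + (b - 1) * r)).
Proof.
  rewrite <- ln_pow, <- pow_INR by (apply lt_0_INR, Nat.lt_0_succ).
  apply ln_le; [apply factb_pos | apply le_INR, factb_le_pow].
Qed.

Lemma eventually_ln_mul_lt_of_xlnx_le c eta : 0 < c -> 0 < eta ->
  exists J : R, forall j m : R, J <= j -> j <= m ->
    j * ln j - j <= ln 2 + c * (m + j) -> (1 + j) * ln m < (c + eta) * m.
Proof.
  intros Hc Heta.
  (* With t = eta/4, the tangent bounds at m/j and at m give
     (1 + j) ln m <= (c + 2t) m + j (c - ln t) + C0, and for large j both
     j (c - ln t) and C0 are below t m. *)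
  set (t := eta / 4); set (K := Rmax 1 (c - ln t)); set (C0 := ln 2 + c - 1 - ln t).
  set (A := 1 + c + (1 + 2 * c) * K / t).
  assert (Ht : 0 < t) by (unfold t; lra).
  assert (HK1 : 1 <= K) by apply Rmax_l.
  assert (HKc : c - ln t <= K) by apply Rmax_r.
  exists (exp A + Rabs (C0 / t) + 1); intros j m HJ Hjm Hfact.
  pose proof (exp_pos A) as HexpA.
  pose proof (Rle_abs (C0 / t)) as HC0abs; pose proof (Rabs_pos (C0 / t)) as HC0pos.
  assert (HlnA : A <= ln j) by (rewrite <- (ln_exp A); apply ln_le; lra).
  assert (Hln2 : ln 2 <= 1) by (pose proof (ln_le_sub_1 2); lra).
  assert (Hfew : j * K <= t * m).
  { assert (Hlarge : j * ((1 + 2 * c) * K / t) <= j * (ln j - 1 - c))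
      by (apply Rmult_le_compat_l; unfold A in HlnA; lra).
    assert (Hsmall : j * (ln j - 1 - c) <= (1 + 2 * c) * m) by nra.
    apply Rmult_le_reg_r with ((1 + 2 * c) / t); [apply Rdiv_lt_0_compat; lra |].
    replace (j * K * ((1 + 2 * c) / t)) with (j * ((1 + 2 * c) * K / t)) by (field; lra).
    replace (t * m * ((1 + 2 * c) / t)) with ((1 + 2 * c) * m) by (field; lra).
    lra. }
  assert (Htan_j : j * ln m <= j * ln j + t * m - j - j * ln t).
  { pose proof (ln_le_tangent t (m / j) Ht ltac:(apply Rdiv_lt_0_compat; lra)) as H.
    unfold Rdiv in H; rewrite ln_mult, ln_Rinv in H by (try apply Rinv_0_lt_compat; lra).
    apply (Rmult_le_compat_l j) in H; [| lra].
    replace (j * (t * (m * / j) - 1 - ln t)) with (t * m - j - j * ln t) in H by (field; lra).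
    lra. }
  pose proof (ln_le_tangent t m Ht ltac:(lra)) as Htan_1.
  assert (HC0 : C0 < t * m).
  { assert (HjC : t * (C0 / t + 1) <= t * m) by (apply Rmult_le_compat_l; lra).
    replace (t * (C0 / t + 1)) with (C0 + t) in HjC by (field; lra); lra. }
  assert (HjK : j * (c - ln t) <= j * K) by (apply Rmult_le_compat_l; lra).
  unfold t, C0 in *; nra.
Qed.

Lemma xlnx_lt_of_ln_lt b m D k a beta :
  1 < b -> 0 < a -> 0 < beta -> 1 <= D -> D <= b * m ->
  a * ln b <= beta * ln m -> D * ln m < a * k * m * ln b ->
  D * ln D < (a + beta) * k * m * ln b.
Proof.
  intros Hb Ha Hbeta HD1 HDm Hm Hlt.
  assert (HL : 0 < ln b) by (rewrite <- ln_1; apply ln_increasing; lra).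
  assert (Hm0 : 0 < m) by nra.
  assert (Hsmall : D < beta * k * m).
  { apply Rmult_lt_reg_r with (a * ln b); [nra |].
    assert (D * (a * ln b) <= D * (beta * ln m)) by (apply Rmult_le_compat_l; lra).
    assert (beta * (D * ln m) < beta * (a * k * m * ln b)) by (apply Rmult_lt_compat_l; lra).
    nra. }
  assert (HlnD : ln D <= ln b + ln m) by (rewrite <- ln_mult by lra; apply ln_le; lra).
  assert (D * ln D <= D * (ln b + ln m)) by (apply Rmult_le_compat_l; lra).
  assert (D * ln b < beta * k * m * ln b) by (apply Rmult_lt_compat_r; lra).
  nra.
Qed.

(** * The Lempel-Ziv parse tree *)

Lemma word_in_iff x T : word_in x T = true <-> In x T.
Proof. unfold word_in; destruct in_dec; split; congruence || tauto. Qed.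

Lemma in_children b x y :
  In y (children b x) <-> exists c, (c < b)%nat /\ y = x ++ [c].
Proof.
  unfold children; rewrite in_map_iff; split.
  - intros [c [<- Hc]]; apply in_seq in Hc; exists c; split; [lia | reflexivity].
  - intros [c [Hc ->]]; exists c; split; [reflexivity | apply in_seq; lia].
Qed.

Definition internal (b : nat) (T : list word) (x : word) : Prop :=
  exists c, (c < b)%nat /\ In (x ++ [c]) T.

Lemma is_leaf_false b T x :
  In x T -> is_leaf b T x = false -> internal b T x.
Proof.
  unfold is_leaf; intros Hx Hleaf.
  apply word_in_iff in Hx; rewrite Hx in Hleaf; simpl in Hleaf.
  apply negb_false_iff, existsb_exists in Hleaf as [y [Hy Hin]].
  apply in_children in Hy as [c [Hc ->]].
  exists c; split; [exact Hc | apply word_in_iff, Hin].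
Qed.

Record parse_inv (b j : nat) (T : list word) (u : word) : Prop := {
  inv_siblings : forall x a c, In (x ++ [a]) T -> (c < b)%nat -> In (x ++ [c]) T;
  inv_depth : forall x, In x T -> (length x <= S j)%nat;
  inv_size : length T = (1 + b + b * j)%nat;
  inv_root : In [0%nat] T;
  inv_partial : internal b T u }.
Arguments inv_siblings {b j T u}.
Arguments inv_depth {b j T u}.
Arguments inv_size {b j T u}.
Arguments inv_root {b j T u}.
Arguments inv_partial {b j T u}.

Lemma internal_child {b j T u x c} :
  parse_inv b j T u -> internal b T x -> (c < b)%nat -> In (x ++ [c]) T.
Proof. intros I [a [_ Ha]] Hc; exact (inv_siblings I x a c Ha Hc). Qed.

Lemma in_T0_singleton b c : (c < b)%nat -> In [c] (T0 b).
Proof. intros Hc; right; apply in_map_iff; exists c; split; [reflexivity | apply in_seq; lia]. Qed.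

Lemma parse_inv_T0 b : (1 <= b)%nat -> parse_inv b 0 (T0 b) [].
Proof.
  intros Hb; split.
  - intros x a c Hx Hc; apply in_T0_singleton in Hc.
    destruct Hx as [Hx | Hx].
    + destruct x; discriminate.
    + apply in_map_iff in Hx as [a' [Hx _]].
      destruct x as [|y [|z x]]; [exact Hc | discriminate | discriminate].
  - intros x [<- | Hx]; [simpl; lia |].
    apply in_map_iff in Hx as [a [<- _]]; simpl; lia.
  - simpl; rewrite length_map, length_seq; lia.
  - apply in_T0_singleton; lia.
  - exists 0%nat; split; [lia | apply in_T0_singleton; lia].
Qed.

Lemma parse_inv_new_phrase {b j T u a} :
  (a < b)%nat -> parse_inv b j T u ->
  parse_inv b (S j) (T ++ children b (u ++ [a])) [].
Proof.
  intros Ha I.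
  assert (Hy : In (u ++ [a]) T) by exact (internal_child I (inv_partial I) Ha).
  split.
  - intros x a' c Hx Hc; apply in_app_or in Hx as [Hx | Hx].
    + apply in_or_app; left; exact (inv_siblings I x a' c Hx Hc).
    + apply in_children in Hx as [d [_ Hd]]; apply app_inj_tail in Hd as [-> _].
      apply in_or_app; right; apply in_children; exists c; auto.
  - intros x Hx; apply in_app_or in Hx as [Hx | Hx].
    + pose proof (inv_depth I x Hx); lia.
    + apply in_children in Hx as [d [_ ->]].
      pose proof (inv_depth I _ Hy); rewrite !length_app in *; simpl in *; lia.
  - rewrite length_app, (inv_size I); unfold children; rewrite length_map, length_seq; lia.
  - apply in_or_app; left; exact (inv_root I).
  - exists 0%nat; split; [lia | apply in_or_app; left; exact (inv_root I)].
Qed.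

Lemma parse_inv_extend {b j T u a} :
  (a < b)%nat -> parse_inv b j T u -> is_leaf b T (u ++ [a]) = false ->
  parse_inv b j T (u ++ [a]).
Proof.
  intros Ha I Hleaf.
  pose proof (internal_child I (inv_partial I) Ha) as Hy.
  destruct I; split; auto; apply is_leaf_false; assumption.
Qed.

Lemma lz_parse_app b w : forall T cur v,
  lz_parse b T cur (w ++ v) =
  let '(j1, T1, u1) := lz_parse b T cur w in
  let '(j2, T2, u2) := lz_parse b T1 u1 v in ((j1 + j2)%nat, T2, u2).
Proof.
  induction w as [|a w IH]; intros T cur v; simpl.
  - destruct (lz_parse b T cur v) as [[j2 T2] u2]; reflexivity.
  - destruct (is_leaf b T (cur ++ [a])); [| apply IH].
    rewrite IH; destruct (lz_parse b (T ++ children b (cur ++ [a])) [] w) as [[j1 T1] u1].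
    destruct (lz_parse b T1 u1 v) as [[j2 T2] u2]; reflexivity.
Qed.

Lemma lz_snoc b w a :
  lz b (w ++ [a]) =
  let '(j, T, u) := lz b w in
  if is_leaf b T (u ++ [a]) then (S j, T ++ children b (u ++ [a]), [])
  else (j, T, u ++ [a]).
Proof.
  unfold lz; rewrite lz_parse_app.
  destruct (lz_parse b (T0 b) [] w) as [[j T] u]; simpl.
  destruct (is_leaf b T (u ++ [a])); simpl; repeat f_equal; lia.
Qed.

Section Parsing.

Variable b : nat.

Lemma lz_nphrases_le w j T u : lz b w = (j, T, u) -> (j <= length w)%nat.
Proof.
  revert j T u; induction w as [|a w IH] using rev_ind; intros j T u E.
  - injection E as <- _ _; simpl; lia.
  - rewrite lz_snoc in E; rewrite length_app; simpl.
    destruct (lz b w) as [[jw Tw] uw]; specialize (IH _ _ _ eq_refl).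
    destruct (is_leaf b Tw (uw ++ [a])); injection E as <- _ _; lia.
Qed.

Lemma lz_split_partial w j T u :
  lz b w = (j, T, u) -> exists w', w = w' ++ u /\ lz b w' = (j, T, []).
Proof.
  revert j T u; induction w as [|a w IH] using rev_ind; intros j T u E.
  - injection E as <- <- <-; exists []; split; reflexivity.
  - pose proof E as Ewa; rewrite lz_snoc in E.
    destruct (lz b w) as [[jw Tw] uw]; destruct (IH _ _ _ eq_refl) as [w' [-> Ew']].
    destruct (is_leaf b Tw (uw ++ [a])); injection E as <- <- <-.
    + exists ((w' ++ uw) ++ [a]); split; [rewrite app_nil_r; reflexivity | exact Ewa].
    + exists w'; split; [rewrite app_assoc; reflexivity | exact Ew'].
Qed.

Lemma nphrases_le_length w : (nphrases b w <= length w)%nat.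
Proof.
  unfold nphrases; destruct (lz b w) as [[j T] u] eqn:E; exact (lz_nphrases_le _ _ _ _ E).
Qed.

Lemma full_parse_prefix w : exists w',
  w = w' ++ partial_phrase b w /\ full_parse b w' /\ nphrases b w' = nphrases b w.
Proof.
  unfold full_parse, nphrases, partial_phrase; destruct (lz b w) as [[j T] u] eqn:E.
  destruct (lz_split_partial _ _ _ _ E) as [w' [-> Ew']].
  exists w'; rewrite Ew'; auto.
Qed.

Lemma D_full w : full_parse b w -> D b w = (1 + (b - 1) * nphrases b w)%nat.
Proof. unfold D, Dr; intros ->; reflexivity. Qed.

Hypothesis hb : (2 <= b)%nat.

Lemma lz_parse_inv w j T u :
  Forall (fun a => (a < b)%nat) w -> lz b w = (j, T, u) -> parse_inv b j T u.
Proof.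
  revert j T u; induction w as [|a w IH] using rev_ind; intros j T u Hw E.
  - injection E as <- <- <-; apply parse_inv_T0; lia.
  - apply Forall_app in Hw as [Hw Ha]; inversion_clear Ha as [| ? ? Ha' _].
    rewrite lz_snoc in E; destruct (lz b w) as [[jw Tw] uw].
    specialize (IH _ _ _ Hw eq_refl).
    destruct (is_leaf b Tw (uw ++ [a])) eqn:Hleaf; injection E as <- <- <-.
    + exact (parse_inv_new_phrase Ha' IH).
    + exact (parse_inv_extend Ha' IH Hleaf).
Qed.

(* The k-th phrase has length at most k, since the tree after k-1 phrases has depth at most k. *)
Lemma lz_length_bound w j T u :
  Forall (fun a => (a < b)%nat) w -> lz b w = (j, T, u) ->
  (2 * length w <= j * S j + 2 * length u)%nat.
Proof.
  revert j T u; induction w as [|a w IH] using rev_ind; intros j T u Hw E.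
  - injection E as <- <- <-; simpl; lia.
  - apply Forall_app in Hw as [Hw Ha]; inversion_clear Ha as [| ? ? Ha' _].
    rewrite lz_snoc in E; destruct (lz b w) as [[jw Tw] uw] eqn:Ew.
    specialize (IH _ _ _ Hw eq_refl).
    pose proof (lz_parse_inv _ _ _ _ Hw Ew) as I.
    pose proof (inv_depth I _ (internal_child I (inv_partial I) Ha')) as Hdepth.
    rewrite length_app in Hdepth |- *; simpl in Hdepth |- *.
    destruct (is_leaf b Tw (uw ++ [a])); injection E as <- <- <-;
      rewrite ?length_app; simpl; nia.
Qed.

Lemma partial_phrase_length_le w : Forall (fun a => (a < b)%nat) w ->
  (length (partial_phrase b w) <= nphrases b w)%nat.
Proof.
  unfold nphrases, partial_phrase; destruct (lz b w) as [[j T] u] eqn:E; simpl; intros Hw.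
  pose proof (lz_parse_inv _ _ _ _ Hw E) as I; destruct (inv_partial I) as [c [_ Hc]].
  pose proof (inv_depth I _ Hc) as H; rewrite length_app in H; simpl in H; lia.
Qed.

Lemma full_parse_length_le w : Forall (fun a => (a < b)%nat) w -> full_parse b w ->
  (2 * length w <= nphrases b w * S (nphrases b w))%nat.
Proof.
  unfold full_parse, nphrases, partial_phrase; destruct (lz b w) as [[j T] u] eqn:E.
  simpl; intros Hw ->; pose proof (lz_length_bound _ _ _ _ Hw E); simpl in *; lia.
Qed.

Lemma ln_d_LZ_full w : full_parse b w ->
  ln (d_LZ b w) = INR (length w) * ln (INR b) - ln (INR (factb b (nphrases b w))).
Proof.
  intros H; assert (HDr : Dr b w = nphrases b w) by (unfold Dr; rewrite H; reflexivity).
  unfold d_LZ; rewrite H, HDr.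
  assert (0 < INR b) by (apply lt_0_INR; lia); pose proof (factb_pos b (nphrases b w)).
  unfold Rdiv; rewrite ln_mult, ln_pow, ln_Rinv; try apply pow_lt; try apply Rinv_0_lt_compat;
    auto; ring.
Qed.

(* L(u) <= |T_j| = 1 + b + b j <= 2 (1 + (b-1)(j+1)). *)
Lemma d_LZ_le w : Forall (fun a => (a < b)%nat) w ->
  d_LZ b w <= 2 * INR b ^ length w / INR (factb b (nphrases b w)).
Proof.
  unfold d_LZ, Dr, nphrases, partial_phrase, final_tree.
  destruct (lz b w) as [[j T] u] eqn:E; simpl; intros Hw.
  pose proof (factb_pos b j) as HF.
  assert (HB : 0 < INR b ^ length w) by (apply pow_lt, lt_0_INR; lia).
  destruct u as [|c u].
  - unfold Rdiv; apply Rmult_le_compat_r; [left; apply Rinv_0_lt_compat |]; lra.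
  - set (K := INR (1 + (b - 1) * S j)).
    assert (HK : 0 < K) by (apply lt_0_INR, Nat.lt_0_succ).
    assert (HLK : INR (Lleaves b T (c :: u)) <= 2 * K).
    { unfold K; replace 2 with (INR 2) by (simpl; ring); rewrite <- mult_INR; apply le_INR.
      pose proof (filter_length_le (fun x => is_leaf b T x && is_prefix (c :: u) x) T).
      pose proof (inv_size (lz_parse_inv _ _ _ _ Hw E)); unfold Lleaves; nia. }
    change (factb b (S j)) with (factb b j * (1 + (b - 1) * S j))%nat.
    rewrite mult_INR; fold K.
    replace (INR b ^ length w * INR (Lleaves b T (c :: u)) / (INR (factb b j) * K))
      with (INR b ^ length w / INR (factb b j) * (INR (Lleaves b T (c :: u)) / K))
      by (field; lra).
    replace (2 * INR b ^ length w / INR (factb b j))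
      with (INR b ^ length w / INR (factb b j) * 2) by (field; lra).
    apply Rmult_le_compat_l; [left; apply Rdiv_lt_0_compat; lra |].
    apply Rmult_le_reg_r with K; [exact HK |].
    unfold Rdiv; rewrite Rmult_assoc, Rinv_l; lra.
Qed.

Lemma ln_d_LZ_le w : Forall (fun a => (a < b)%nat) w -> 0 < d_LZ b w ->
  ln (d_LZ b w) <= ln 2 + INR (length w) * ln (INR b) - ln (INR (factb b (nphrases b w))).
Proof.
  intros Hw Hd; eapply Rle_trans; [apply ln_le; [exact Hd | apply d_LZ_le, Hw] |].
  assert (0 < INR b) by (apply lt_0_INR; lia); pose proof (factb_pos b (nphrases b w)).
  unfold Rdiv; rewrite Rmult_assoc, ln_mult, ln_mult, ln_pow, ln_Rinv;
    try apply Rmult_lt_0_compat; try apply pow_lt; try apply Rinv_0_lt_compat; lra.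
Qed.

End Parsing.

Lemma prefix_length S n : length (prefix S n) = n.
Proof. unfold prefix; rewrite length_map, length_seq; reflexivity. Qed.

Lemma prefix_add S m k : prefix S (m + k) = prefix S m ++ map S (seq m k).
Proof. unfold prefix; rewrite seq_app, map_app; reflexivity. Qed.

Lemma prefix_app_inv S n w v : prefix S n = w ++ v -> w = prefix S (length w).
Proof.
  intros E.
  assert (Hn : n = (length w + length v)%nat)
    by (rewrite <- length_app, <- E; symmetry; apply prefix_length).
  rewrite Hn, prefix_add in E; apply (f_equal (firstn (length w))) in E.
  rewrite !firstn_app, prefix_length, !Nat.sub_diag, firstn_all in E.
  rewrite firstn_all2 in E by (rewrite prefix_length; lia).
  simpl in E; rewrite !app_nil_r in E; symmetry; exact E.
Qed.

Definition dLZ_exp_rate_pos (b : nat) (S : nat -> nat) : Prop :=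
  exists eps : R, eps > 0 /\
    forall N : nat, exists n : nat, (N <= n)%nat /\ (1 <= n)%nat /\
      ln (d_LZ b (prefix S n)) / INR n > eps.

Definition sparse_full_parses_length (b : nat) (S : nat -> nat) : Prop :=
  exists alpha : R, alpha < 1 /\
    forall N : nat, exists n : nat, (N <= n)%nat /\ full_parse b (prefix S n) /\
      INR (D b (prefix S n)) * logb b (INR (length (prefix S n)))
        < alpha * INR (b - 1) * INR (length (prefix S n)).

Definition sparse_full_parses_D (b : nat) (S : nat -> nat) : Prop :=
  exists alpha : R, alpha < 1 /\
    forall N : nat, exists n : nat, (N <= n)%nat /\ full_parse b (prefix S n) /\
      INR (D b (prefix S n)) * logb b (INR (D b (prefix S n)))
        < alpha * INR (b - 1) * INR (length (prefix S n)).

Section Sequence.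

Variables (b : nat) (S : nat -> nat).
Hypothesis hb : (2 <= b)%nat.
Hypothesis hS : forall i, (S i < b)%nat.

Lemma prefix_letters n : Forall (fun a => (a < b)%nat) (prefix S n).
Proof.
  apply Forall_forall; intros a Ha; unfold prefix in Ha.
  apply in_map_iff in Ha as [i [<- _]]; apply hS.
Qed.

Lemma exists_full_parse_prefix n : exists m, full_parse b (prefix S m) /\
  nphrases b (prefix S m) = nphrases b (prefix S n) /\ (n <= m + nphrases b (prefix S n))%nat.
Proof.
  destruct (full_parse_prefix b (prefix S n)) as [w [E [Hfull Hj]]].
  pose proof (partial_phrase_length_le b hb _ (prefix_letters n)) as Hu.
  pose proof (f_equal (@length nat) E) as Hlen; rewrite length_app, prefix_length in Hlen.
  rewrite (prefix_app_inv _ _ _ _ E) in Hfull, Hj.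
  exists (length w); repeat split; [exact Hfull | exact Hj | lia].
Qed.

Lemma INR_D_form j : INR (1 + (b - 1) * j) = 1 + INR (b - 1) * INR j.
Proof. rewrite plus_INR, mult_INR, INR_1; reflexivity. Qed.

Lemma INR_b_sub_1_ge_1 : 1 <= INR (b - 1).
Proof. rewrite <- INR_1; apply le_INR; lia. Qed.

Lemma exp_rate_of_sparse_D : sparse_full_parses_D b S -> dLZ_exp_rate_pos b S.
Proof.
  intros [alpha [Halpha Hsparse]].
  pose proof (ln_nat_pos b hb) as HL; pose proof INR_b_sub_1_ge_1 as HB.
  exists ((1 - alpha) * ln (INR b)); split; [nra |]; intros N.
  destruct (Hsparse N) as [m [HNm [Hfull Hlt]]]; exists m; split; [exact HNm |].
  rewrite (D_full b), prefix_length, mul_logb_lt_iff in Hlt by assumption.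
  rewrite (ln_d_LZ_full b hb _ Hfull), prefix_length.
  pose proof (ln_factb_le b (nphrases b (prefix S m))) as Hfact.
  set (j := nphrases b (prefix S m)) in *.
  set (Dj := INR (1 + (b - 1) * j)) in *.
  assert (HDj : Dj = 1 + INR (b - 1) * INR j) by apply INR_D_form.
  assert (HlnD : 0 <= ln Dj) by (apply ln_ge0; pose proof (pos_INR j); nra).
  assert (Hj : INR j * ln Dj < alpha * INR m * ln (INR b)).
  { apply Rmult_lt_reg_l with (INR (b - 1)); [lra |].
    assert (INR (b - 1) * INR j * ln Dj <= Dj * ln Dj) by (apply Rmult_le_compat_r; lra).
    lra. }
  assert (Hm : (1 <= m)%nat).
  { destruct m as [|m]; [| lia].
    rewrite INR_0 in Hlt.
    assert (0 <= Dj * ln Dj) by (apply Rmult_le_pos; [pose proof (pos_INR j); nra | exact HlnD]).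
    nra. }
  assert (HmR : 0 < INR m) by (apply lt_0_INR; lia).
  split; [exact Hm |].
  apply (proj2 (lt_div_iff _ _ _ HmR)); nra.
Qed.

Lemma sparse_D_of_sparse_length :
  sparse_full_parses_length b S -> sparse_full_parses_D b S.
Proof.
  intros [alpha [Halpha Hsparse]].
  pose proof (ln_nat_pos b hb) as HL.
  set (a := Rmax alpha (1 / 2)); set (beta := (1 - a) / 2).
  assert (Ha : 1 / 2 <= a < 1) by (split; [apply Rmax_r | apply Rmax_lub_lt; lra]).
  assert (Halpha_a : alpha <= a) by apply Rmax_l.
  destruct (exists_nat_ln_ge (a * ln (INR b) / beta)) as [M [HM1 HM]].
  exists (a + beta); split; [unfold beta; lra |]; intros N.
  destruct (Hsparse (N + M)%nat) as [m [HNm [Hfull Hlt]]].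
  exists m; split; [lia | split; [exact Hfull |]].
  rewrite (D_full b), prefix_length, mul_logb_lt_iff in * by assumption.
  pose proof (nphrases_le_length b (prefix S m)) as Hjm; rewrite prefix_length in Hjm.
  apply xlnx_lt_of_ln_lt with (b := INR b).
  - apply lt_1_INR; lia.
  - lra.
  - unfold beta; lra.
  - rewrite <- INR_1; apply le_INR; nia.
  - rewrite <- mult_INR; apply le_INR; nia.
  - assert (ln (INR M) <= ln (INR m)) by (apply ln_le; [apply lt_0_INR; lia | apply le_INR; lia]).
    assert (beta * (a * ln (INR b) / beta) <= beta * ln (INR m))
      by (apply Rmult_le_compat_l; unfold beta in *; lra).
    replace (beta * (a * ln (INR b) / beta)) with (a * ln (INR b)) in * by (field; unfold beta; lra).
    lra.
  - eapply Rlt_le_trans; [exact Hlt |].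
    pose proof INR_b_sub_1_ge_1; pose proof (pos_INR m).
    repeat apply Rmult_le_compat_r; nra.
Qed.

Lemma xlnx_nphrases_le_of_rate eps n : 0 < eps ->
  eps * INR n < ln (d_LZ b (prefix S n)) ->
  INR (nphrases b (prefix S n)) * ln (INR (nphrases b (prefix S n)))
    - INR (nphrases b (prefix S n)) <= ln 2 + (ln (INR b) - eps) * INR n.
Proof.
  intros Heps Hrate.
  assert (Hd : 0 < d_LZ b (prefix S n)) by (apply ln_pos_inv; pose proof (pos_INR n); nra).
  pose proof (ln_d_LZ_le b hb _ (prefix_letters n) Hd) as Hup; rewrite prefix_length in Hup.
  pose proof (ln_factb_ge b (nphrases b (prefix S n)) hb); lra.
Qed.

Lemma sparse_length_of_exp_rate :
  dLZ_exp_rate_pos b S -> sparse_full_parses_length b S.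
Proof.
  intros [eps [Heps Hrate]].
  pose proof (ln_nat_pos b hb) as HL; pose proof INR_b_sub_1_ge_1 as HB.
  (* Capping eps at (ln b)/2 keeps c = ln b - e positive. *)
  set (e := Rmin eps (ln (INR b) / 2)); set (c := ln (INR b) - e).
  assert (He : 0 < e <= eps /\ e <= ln (INR b) / 2)
    by (split; [split; [apply Rmin_glb_lt; lra | apply Rmin_l] | apply Rmin_r]).
  destruct (eventually_ln_mul_lt_of_xlnx_le c (e / 2)) as [J0 HJ0]; [unfold c; lra | lra |].
  destruct (exists_nat_ge J0) as [J HJ].
  exists ((c + e / 2) / ln (INR b)); split.
  { apply Rmult_lt_reg_r with (ln (INR b)); [exact HL |].
    unfold Rdiv; rewrite Rmult_assoc, Rinv_l by lra; unfold c; lra. }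
  (* n <= m + j <= 2 m, so m > N + J * J, and then 2 m <= j (j + 1) forces j >= J. *)
  intros N; destruct (Hrate (2 * (N + J * J + 1))%nat) as [n [HNn [_ Hn]]].
  apply (lt_div_iff _ _ (INR n) ltac:(apply lt_0_INR; lia)) in Hn.
  pose proof (xlnx_nphrases_le_of_rate _ _ Heps Hn) as Hxlnx.
  destruct (exists_full_parse_prefix n) as [m [Hfull [Hj Hnm]]].
  set (j := nphrases b (prefix S n)) in *.
  pose proof (nphrases_le_length b (prefix S m)) as Hjm; rewrite prefix_length, Hj in Hjm.
  pose proof (full_parse_length_le b hb _ (prefix_letters m) Hfull) as Hmj.
  rewrite prefix_length, Hj in Hmj.
  assert (HJj : (J <= j)%nat) by nia.
  exists m; split; [lia | split; [exact Hfull |]].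
  rewrite (D_full b), prefix_length, Hj, mul_logb_lt_iff, INR_D_form by assumption.
  assert (Hmain : (1 + INR j) * ln (INR m) < (c + e / 2) * INR m).
  { apply HJ0; [eapply Rle_trans; [exact HJ | apply le_INR; exact HJj] |
                apply le_INR; exact Hjm |].
    assert (INR n <= INR m + INR j) by (rewrite <- plus_INR; apply le_INR; exact Hnm).
    assert ((ln (INR b) - eps) * INR n <= c * INR n)
      by (apply Rmult_le_compat_r; [apply pos_INR | unfold c; lra]).
    assert (c * INR n <= c * (INR m + INR j)) by (apply Rmult_le_compat_l; unfold c; lra).
    lra. }
  assert (HlnM : 0 <= ln (INR m)) by (apply ln_ge0; rewrite <- INR_1; apply le_INR; nia).
  replace ((c + e / 2) / ln (INR b) * INR (b - 1) * INR m * ln (INR b))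
    with (INR (b - 1) * ((c + e / 2) * INR m)) by (field; lra).
  pose proof (pos_INR j).
  assert (INR (b - 1) * ((1 + INR j) * ln (INR m)) < INR (b - 1) * ((c + e / 2) * INR m))
    by (apply Rmult_lt_compat_l; lra).
  nra.
Qed.

End Sequence.

Theorem corollary2p3 (b : nat) (S : nat -> nat)
  (hb : (2 <= b)%nat) (hS : forall i, (S i < b)%nat) :
  ( (exists eps : R, eps > 0 /\
      forall N : nat, exists n : nat, (N <= n)%nat /\ (1 <= n)%nat /\
        ln (d_LZ b (prefix S n)) / INR n > eps)
  <->
    (exists alpha : R, alpha < 1 /\
      forall N : nat, exists n : nat, (N <= n)%nat /\
        full_parse b (prefix S n) /\
        INR (D b (prefix S n)) * logb b (INR (length (prefix S n)))
          < alpha * INR (b - 1) * INR (length (prefix S n))) ) /\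
  ( (exists alpha : R, alpha < 1 /\
      forall N : nat, exists n : nat, (N <= n)%nat /\
        full_parse b (prefix S n) /\
        INR (D b (prefix S n)) * logb b (INR (length (prefix S n)))
          < alpha * INR (b - 1) * INR (length (prefix S n)))
  <->
    (exists alpha : R, alpha < 1 /\
      forall N : nat, exists n : nat, (N <= n)%nat /\
        full_parse b (prefix S n) /\
        INR (D b (prefix S n)) * logb b (INR (D b (prefix S n)))
          < alpha * INR (b - 1) * INR (length (prefix S n))) ).
Proof.
  pose proof (sparse_length_of_exp_rate b S hb hS) as a_b.
  pose proof (sparse_D_of_sparse_length b S hb) as b_c.
  pose proof (exp_rate_of_sparse_D b S hb) as c_a.
  split; split; intros H.
  - exact (a_b H).
  - exact (c_a (b_c H)).
  - exact (b_c H).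
  - exact (a_b (c_a H)).
Qed.
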